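(* Let $A,B$ be $d\times d$ matrices with entries in a commutative ring, such that $AB=0$. Define $c_i(A)$ by $\det(tI-A)=t^d+c_1(A)t^{d-1}+\dots+c_d(A)$, and similarly $c_j(B)$. Then $c_i(A)c_j(B)=0$ whenever $i+j>d$. *)

From mathcomp Require Import all_boot all_order all_algebra.
Set Implicit Arguments. Unset Strict Implicit. Unset Printing Implicit Defensive.
Import GRing.Theory.
Local Open Scope ring_scope.

Definition charcoef (R : comNzRingType) (d : nat) (A : 'M[R]_d) (i : nat) : R :=
  (char_poly A)`_(d - i).

From mathcomp Require Import all_boot all_order all_algebra.
From mathcomp Require Import zify.
Set Implicit Arguments. Unset Strict Implicit. Unset Printing Implicit Defensive.
Import GRing.Theory.
Local Open Scope ring_scope.

(* Over R[t], the matrices tA and B still satisfy (tA) B = 0, hence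
   (X - tA)(X - B) = X (X - (tA + B)) and char_poly (tA) * char_poly B is
   divisible by X^d.  As char_poly (tA) = sum_k t^(d-k) c_(d-k)(A) X^k, the
   coefficient of X^(2d-i-j) t^i in that product is c_i(A) c_j(B), and
   2d-i-j < d when i + j > d. *)

Lemma coef_comp_poly_scaleX (R : comNzRingType) (p : {poly R}) (a : R) k :
  (p \Po (a *: 'X))`_k = a ^+ k * p`_k.
Proof.
rewrite comp_polyE.
under eq_bigr do rewrite exprZn scalerA mulrC.
rewrite coef_sumMXn (big_ord1_eq _ (fun i => a ^+ i * p`_i)).
by case: ltnP => // hk; rewrite nth_default ?mulr0.
Qed.

Lemma coef_sum_scale_Xnsub (R : comNzRingType) (c : nat -> R) d m k :
  (m <= d)%N -> (k <= m)%N ->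
  (\sum_(l < m.+1) c l *: 'X^(d - l))`_(d - k) = c k.
Proof.
move=> hmd hkm; rewrite coef_sumMXn.
rewrite (eq_bigl (fun l : 'I_m.+1 => nat_of_ord l == k)).
  by rewrite (big_ord1_eq _ c) ltnS hkm.
move=> l /=; have hld : (l <= d)%N by rewrite (leq_trans _ hmd) // -ltnS.
by rewrite eqn_sub2lE // (leq_trans hkm hmd).
Qed.

Lemma char_poly_scale (R : comNzRingType) d (a : R) (A : 'M[R]_d) :
  char_poly (a *: A) \Po (a *: 'X) = a ^+ d *: char_poly A.
Proof.
rewrite /char_poly -det_map_mx.
have -> : map_mx (comp_poly (a *: 'X)) (char_poly_mx (a *: A)) =
          a%:P *: char_poly_mx A.
  apply/matrixP => i j; rewrite !mxE.
  case: (i == j); rewrite /= ?mulr1n ?mulr0n.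
    by rewrite comp_polyD comp_polyX raddfN /= comp_polyC -mul_polyC mulrBr polyCM.
  by rewrite sub0r raddfN /= comp_polyC polyCM sub0r mulrN.
by rewrite (@detZ _ _ (a%:P)) -rmorphXn mul_polyC.
Qed.

Lemma coef_char_poly_scaleX (R : comNzRingType) d (A : 'M[R]_d) k : (k <= d)%N ->
  (char_poly ('X *: map_mx polyC A))`_k = (char_poly A)`_k *: 'X^(d - k).
Proof.
move=> hkd; apply: (monic_lreg (monicXn _ k)).
have := congr1 (coefp k) (char_poly_scale 'X (map_mx polyC A)).
rewrite /= coef_comp_poly_scaleX coefZ -map_char_poly coef_map /= => ->.
by rewrite -scalerAr -exprD subnKC // mulrC mul_polyC.
Qed.

Lemma mul_char_poly_of_mulmx0 (R : comNzRingType) d (M N : 'M[R]_d) : M *m N = 0 ->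
  char_poly M * char_poly N = 'X^d * char_poly (M + N).
Proof.
move=> MN0; rewrite /char_poly -det_mulmx.
have -> : char_poly_mx M *m char_poly_mx N = 'X *: char_poly_mx (M + N).
  rewrite /char_poly_mx mulmxBl !mulmxBr mul_scalar_mx mul_mx_scalar mul_scalar_mx.
  rewrite -map_mxM MN0 map_mx0 subr0 map_mxD scalerBr scalerDr.
  by rewrite opprD addrA addrAC.
by rewrite (@detZ _ _ 'X).
Qed.

Theorem lemma4p12 (R : comNzRingType) (d : nat) (A B : 'M[R]_d)
  (hAB : A *m B = 0) (i j : nat) (hi : (1 <= i <= d)%N) (hj : (1 <= j <= d)%N)
  (hij : (d < i + j)%N) :
  charcoef A i * charcoef B j = 0.
Proof.
rewrite /charcoef; set m := (d - i + (d - j))%N.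
have hm : (m < d)%N by rewrite /m; lia.
have tAB : ('X *: map_mx polyC A) *m map_mx polyC B = 0.
  by rewrite -scalemxAl -map_mxM hAB map_mx0 scaler0.
have prod_m : (char_poly ('X *: map_mx polyC A) * char_poly (map_mx polyC B))`_m = 0.
  by rewrite mul_char_poly_of_mulmx0 // coefXnM hm.
have {}prod_m : \sum_(l < m.+1)
    ((char_poly A)`_l * (char_poly B)`_(m - l)) *: 'X^(d - l) = 0.
  rewrite -[RHS]prod_m coefM; apply: eq_bigr => l _.
  rewrite coef_char_poly_scaleX; last by rewrite (leq_trans _ (ltnW hm)) // -ltnS.
  by rewrite -map_char_poly coef_map /= [_ * _%:P]mulrC mul_polyC scalerA mulrC.
have := congr1 (fun p : {poly R} => p`_(d - (d - i))) prod_m.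
rewrite (coef_sum_scale_Xnsub (fun l => (char_poly A)`_l * (char_poly B)`_(m - l))).
- by rewrite coef0 addKn.
- exact: ltnW.
- exact: leq_addr.
Qed.
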